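(* Let $z_{1},\ldots,z_{D'}$ be distinct points of $\mathbb{R}^{d}$ and let $D^{+}\geq2D'-1$. Consider the multivariate Hermite matrix whose columns are indexed by $\alpha\in\mathcal{I}_{D^{+}}$ and whose rows are the $D'$ rows $(p_{\alpha}(z_{i}))_{\alpha}$, $i=1,\ldots,D'$, followed by the $dD'$ rows given by the gradients $(\nabla p_{\alpha}(z_{i}))_{\alpha}$, $i=1,\ldots,D'$ (each gradient contributing $d$ rows, one per partial derivative). Then the rank of this matrix equals its number of rows, $D'(d+1)$.
   Context: For a multi-index $\alpha=(\alpha_{1},\ldots,\alpha_{d})\in\mathbb{Z}_{\geq0}^{d}$, $p_{\alpha}(z)=\prod_{i=1}^{d}(\pi_{i}z)^{\alpha_{i}}$, where $\pi_{i}$ is the $i$-th coordinate, and $|\alpha|=\sum_i\alpha_i$. $\mathcal{I}_{D^{+}}$ is the set of all multi-indices with $|\alpha|\leq D^{+}$. *)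

From HB Require Import structures.
From mathcomp Require Import all_boot all_order all_algebra.
From mathcomp Require Import ssrnum reals.
From mathcomp Require Import mpoly.
Set Implicit Arguments. Unset Strict Implicit. Unset Printing Implicit Defensive.
Import Order.TTheory GRing.Theory Num.Theory.
Local Open Scope ring_scope.

(* Multi-indices alpha in Z_{>=0}^d with |alpha| <= Dp, i.e. the set I_{D+}:
   monomials of total degree < Dp.+1. *)
Notation multi_index d Dp := ('X_{1..d < Dp.+1}).

Definition ncols (d Dp : nat) : nat := #|{: multi_index d Dp}|.

Definition col_alpha (d Dp : nat) (k : 'I_(ncols d Dp)) : multi_index d Dp :=
  enum_val k.

Definition p_alpha (R : ringType) (d : nat) (a : 'X_{1..d}) : {mpoly R[d]} :=
  'X_[a].

Definition ev (R : comRingType) (d : nat) (z : 'rV[R]_d) (p : {mpoly R[d]}) : R :=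
  p.@[fun j => z 0 j].

Definition value_block (R : comRingType) (d Dp D' : nat) (z : 'I_D' -> 'rV[R]_d)
  : 'M[R]_(D', ncols d Dp) :=
  \matrix_(i < D', k < ncols d Dp) ev (z i) (p_alpha R (col_alpha k)).

Definition grad_block (R : comRingType) (d Dp : nat) (zi : 'rV[R]_d)
  : 'M[R]_(d, ncols d Dp) :=
  \matrix_(j < d, k < ncols d Dp) ev zi (mderiv j (p_alpha R (col_alpha k))).

Definition hermite_matrix (R : comRingType) (d Dp D' : nat)
  (z : 'I_D' -> 'rV[R]_d) : 'M[R]_(D' + \sum_(i < D') d, ncols d Dp) :=
  col_mx (value_block Dp z) (\mxcol_(i < D') grad_block Dp (z i)).

From HB Require Import structures.
From mathcomp Require Import all_boot all_order all_algebra.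
From mathcomp Require Import ssrnum reals.
From mathcomp Require Import mpoly zify.
Set Implicit Arguments. Unset Strict Implicit. Unset Printing Implicit Defensive.
Import Order.TTheory GRing.Theory Num.Theory.
Local Open Scope ring_scope.

(* A row vector [w] annihilating the Hermite matrix defines a linear form
   p |-> sum_i w_i p(z_i) + sum_(i,l) w_(i,l) (d_l p)(z_i) vanishing on every
   polynomial of degree <= D+.  The cutoff L_i = prod_(j <> i) |x - z_j|^2 has
   degree 2(D'-1), vanishes to second order at every z_j with j <> i and does
   not vanish at z_i.  Testing the form on L_i (x_l - z_(i,l)) isolates the
   coefficient w_(i,l), and then testing it on L_i isolates w_i; both test
   polynomials have degree <= 2D'-1 <= D+, so w = 0 and the rows are free. *)

Section DoubleRoot.
Variables (R : comNzRingType) (n : nat).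
Implicit Types (p q : {mpoly R[n]}) (a : 'I_n -> R).

Definition double_root a p := p.@[a] = 0 /\ forall l, (mderiv l p).@[a] = 0.

Lemma double_rootMr a p q : double_root a p -> double_root a (p * q).
Proof.
move=> [p_a dp_a]; split=> [|l]; first by rewrite mevalM p_a mul0r.
by rewrite mderivM mevalD !mevalM p_a dp_a !mul0r addr0.
Qed.

Lemma mderiv_Xsub l k c : mderiv l ('X_k - c%:MP : {mpoly R[n]}) = (k == l)%:R%:MP.
Proof.
rewrite mderivB mderivC subr0 mderivX mnm1E.
have [->|_] := eqVneq k l; last by rewrite scale0r.
have -> : (U_(l) - U_(l))%MM = 0%MM by apply/mnmP => j; rewrite mnmBE subnn mnm0E.
by rewrite mpolyX0 alg_mpolyC.
Qed.

Lemma msize_Xsub k c : (msize ('X_k - c%:MP : {mpoly R[n]}) <= 2)%N.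
Proof.
apply: leq_trans (msizeD_le _ _) _.
by rewrite msizeN msizeC msizeX mdeg1 geq_max; case: (c != 0).
Qed.

Lemma meval_mulr_Xsub p c l : (p * ('X_l - (c l)%:MP)).@[c] = 0.
Proof. by rewrite mevalM mevalB mevalXU mevalC subrr mulr0. Qed.

Lemma meval_mderiv_mulr_Xsub p c k l :
  (mderiv k (p * ('X_l - (c l)%:MP))).@[c] = p.@[c] * (l == k)%:R.
Proof.
by rewrite mderivM mevalD !mevalM mderiv_Xsub mevalB mevalXU !mevalC subrr mulr0 add0r.
Qed.

End DoubleRoot.

Section SizeProd.
Variables (R : idomainType) (n : nat).
Implicit Types (p q : {mpoly R[n]}).

Lemma msizeM_le_idom p q : (msize (p * q) <= (msize p + msize q).-1)%N.
Proof.
have [->|p_neq0] := eqVneq p 0; first by rewrite mul0r msize0.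
have [->|q_neq0] := eqVneq q 0; first by rewrite mulr0 msize0.
by rewrite msizeM.
Qed.

Lemma msize_prod_le (I : Type) (s : seq I) (F : I -> {mpoly R[n]}) k :
  (forall i, msize (F i) <= k.+1)%N -> (msize (\prod_(i <- s) F i) <= k * size s + 1)%N.
Proof.
move=> size_F; elim: s => [|x s IHs]; first by rewrite big_nil msize1 muln0.
rewrite big_cons; apply: leq_trans (msizeM_le_idom _ _) _.
have := leq_add (size_F x) IHs; rewrite /=; lia.
Qed.

End SizeProd.

Section SquaredDistance.
Variables (R : realDomainType) (n : nat).
Implicit Types (a c : 'I_n -> R).

Definition sqdist_poly c : {mpoly R[n]} := \sum_k ('X_k - (c k)%:MP) ^+ 2.

Lemma meval_sqdist_poly a c : (sqdist_poly c).@[a] = \sum_k (a k - c k) ^+ 2.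
Proof.
rewrite /sqdist_poly rmorph_sum; apply: eq_bigr => k _.
by rewrite rmorphXn /= mevalB mevalXU mevalC.
Qed.

Lemma sqdist_poly_eq0 a c : (sqdist_poly c).@[a] = 0 -> a =1 c.
Proof.
rewrite meval_sqdist_poly => /psumr_eq0P sq_eq0 k.
apply/eqP; rewrite -subr_eq0 -sqrf_eq0; apply/eqP/sq_eq0 => // j _.
exact: sqr_ge0.
Qed.

Lemma double_root_sqdist_poly c : double_root c (sqdist_poly c).
Proof.
split=> [|l].
  by rewrite meval_sqdist_poly big1 // => k _; rewrite subrr expr0n.
rewrite /sqdist_poly (raddf_sum (mderiv l)) raddf_sum big1 //= => k _.
by rewrite expr2 mderivM mevalD !mevalM mevalB mevalXU mevalC subrr mulr0 mul0r addr0.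
Qed.

Lemma msize_sqdist_poly c : (msize (sqdist_poly c) <= 3)%N.
Proof.
apply: leq_trans (msize_sum _ _ _) _; apply/bigmax_leqP => k _.
rewrite expr2; apply: leq_trans (msizeM_le_idom _ _) _.
by rewrite -subn1; apply: leq_sub2r (leq_add (msize_Xsub _ _) (msize_Xsub _ _)).
Qed.

End SquaredDistance.

Section CutoffPolynomial.
Variables (R : realDomainType) (n D : nat) (a : 'I_D -> 'I_n -> R).
Hypothesis a_inj : forall i j, a i =1 a j -> i = j.

Definition cutoff_poly i : {mpoly R[n]} :=
  \prod_(j <- rem i (enum 'I_D)) sqdist_poly (a j).

Lemma double_root_cutoff_poly i j : j != i -> double_root (a j) (cutoff_poly i).
Proof.
move=> ji; rewrite /cutoff_poly (big_rem j).
  exact/double_rootMr/double_root_sqdist_poly.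
by rewrite (mem_rem_uniq _ (enum_uniq _)) inE ji mem_enum.
Qed.

Lemma cutoff_poly_neq0 i : (cutoff_poly i).@[a i] != 0.
Proof.
rewrite /cutoff_poly rmorph_prod prodf_seq_neq0; apply/allP => j.
rewrite (mem_rem_uniq _ (enum_uniq _)) inE => /andP[ji _] /=.
by apply: contra ji => /eqP/sqdist_poly_eq0/a_inj->.
Qed.

Lemma msize_cutoff_poly i : (msize (cutoff_poly i) <= 2 * D.-1 + 1)%N.
Proof.
rewrite /cutoff_poly; apply: leq_trans (msize_prod_le _ (fun j => msize_sqdist_poly (a j))) _.
by rewrite size_rem ?mem_enum // size_enum_ord.
Qed.

End CutoffPolynomial.

Section HermiteForm.
Variables (R : comNzRingType) (n D : nat) (a : 'I_D -> 'I_n -> R).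
Variables (u : 'I_D -> R) (v : 'I_D -> 'I_n -> R).

Definition hermite_form (p : {mpoly R[n]}) : R :=
  \sum_i u i * p.@[a i] + \sum_i \sum_l v i l * (mderiv l p).@[a i].

Lemma hermite_form_is_linear : linear_for *%R hermite_form.
Proof.
move=> c p q; rewrite /hermite_form mulrDr addrACA !mulr_sumr -!big_split /=.
apply: eq_bigr => i _; rewrite mevalD mevalZ mulrDr mulrCA; congr (_ + _).
rewrite mulr_sumr -big_split; apply: eq_bigr => l _ /=.
by rewrite mderivD mderivZ mevalD mevalZ mulrDr mulrCA.
Qed.

HB.instance Definition _ := GRing.isLinear.Build R {mpoly R[n]} R _ hermite_form
  hermite_form_is_linear.

Lemma hermite_form_eq0 N :
    (forall m : 'X_{1..n}, (mdeg m <= N)%N -> hermite_form 'X_[m] = 0) ->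
  forall p, (msize p <= N.+1)%N -> hermite_form p = 0.
Proof.
move=> form_X p size_p; rewrite (mpolyE p) linear_sum big1_seq // => m /= m_supp.
by rewrite linearZ /= form_X ?mulr0 // -ltnS (leq_trans (msize_mdeg_lt m_supp)).
Qed.

Lemma hermite_form_local i p : (forall j, j != i -> double_root (a j) p) ->
  hermite_form p = u i * p.@[a i] + \sum_l v i l * (mderiv l p).@[a i].
Proof.
move=> p_other; rewrite /hermite_form (bigD1 i) // [X in _ + X = _](bigD1 i) //=.
rewrite [X in _ + X + _]big1 => [|j ji]; last by case: (p_other j ji) => -> _; rewrite mulr0.
rewrite [X in _ + (_ + X)]big1 => [|j ji]; last first.
  by apply: big1 => l _; case: (p_other j ji) => _ ->; rewrite mulr0.
by rewrite !addr0.
Qed.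

End HermiteForm.

Section Unisolvence.
Variables (R : realDomainType) (n D : nat) (a : 'I_D -> 'I_n -> R).
Hypothesis a_inj : forall i j, a i =1 a j -> i = j.
Variables (u : 'I_D -> R) (v : 'I_D -> 'I_n -> R).
(* [msize p <= 2 * D] means that [p] has total degree at most [2 D - 1]. *)
Hypothesis form_eq0 : forall p, (msize p <= 2 * D)%N -> hermite_form a u v p = 0.

Lemma hermite_form_grad_coef_eq0 i l : v i l = 0.
Proof.
pose p := cutoff_poly a i * ('X_l - (a i l)%:MP).
have size_p : (msize p <= 2 * D)%N.
  rewrite (leq_trans (msizeM_le_idom _ _)) // -subn1.
  apply: leq_trans (leq_sub2r 1 (leq_add (msize_cutoff_poly a i) (msize_Xsub l (a i l)))) _.
  by have := ltn_ord i; lia.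
have := form_eq0 size_p; rewrite (hermite_form_local u v (i := i)) => [|j ji]; last first.
  exact/double_rootMr/double_root_cutoff_poly.
rewrite meval_mulr_Xsub mulr0 add0r (bigD1 l) //= big1 => [|k kl]; last first.
  by rewrite meval_mderiv_mulr_Xsub eq_sym (negbTE kl) !mulr0.
rewrite meval_mderiv_mulr_Xsub eqxx mulr1 addr0 => /eqP.
by rewrite mulf_eq0 (negbTE (cutoff_poly_neq0 a_inj i)) orbF => /eqP.
Qed.

Lemma hermite_form_value_coef_eq0 i : u i = 0.
Proof.
have size_L : (msize (cutoff_poly a i) <= 2 * D)%N.
  by apply: leq_trans (msize_cutoff_poly a i) _; have := ltn_ord i; lia.
have := form_eq0 size_L; rewrite (hermite_form_local u v (i := i)) => [|j ji]; last first.
  exact: double_root_cutoff_poly.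
rewrite big1 => [|l _]; last by rewrite hermite_form_grad_coef_eq0 mul0r.
rewrite addr0 => /eqP.
by rewrite mulf_eq0 (negbTE (cutoff_poly_neq0 a_inj i)) orbF => /eqP.
Qed.

End Unisolvence.

Section HermiteMatrix.
Variables (R : realFieldType) (d D' Dp : nat) (z : 'I_D' -> 'rV[R]_d).

Definition nodes (i : 'I_D') : 'I_d -> R := fun j => z i 0 j.

Lemma hermite_matrix_form (w : 'rV[R]_(D' + \sum_(i < D') d)) :
    w *m hermite_matrix Dp z = 0 ->
  forall m : 'X_{1..d}, (mdeg m <= Dp)%N ->
  hermite_form nodes (fun i => lsubmx w 0 i) (fun i l => submxrow (rsubmx w) i 0 l)
    'X_[m] = 0.
Proof.
move=> w_ker m m_le; have m_lt : (mdeg m < Dp.+1)%N by [].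
pose k := enum_rank (BMultinom m_lt : multi_index d Dp).
have alpha_k : col_alpha k = BMultinom m_lt by rewrite /col_alpha enum_rankK.
move: w_ker; rewrite -[w]hsubmxK /hermite_matrix mul_row_col.
rewrite -[X in _ + X *m _](submxrowK (rsubmx _)) mul_mxrow_mxcol !hsubmxK.
move/matrixP => /(_ 0 k); rewrite !mxE summxE => <-; congr (_ + _).
  by apply: eq_bigr => i _; rewrite [X in _ = _ * X]mxE /ev /p_alpha alpha_k.
apply: eq_bigr => i _; rewrite [RHS]mxE; apply: eq_bigr => l _.
by rewrite [X in _ = _ * X]mxE /ev /p_alpha alpha_k.
Qed.

Lemma row_free_hermite_matrix :
  injective z -> (2 * D' - 1 <= Dp)%N -> row_free (hermite_matrix Dp z).
Proof.
move=> z_inj Dp_ge; apply: inj_row_free => w /hermite_matrix_form form_X.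
have nodes_inj i j : nodes i =1 nodes j -> i = j.
  by move=> eq_ij; apply: z_inj; apply/rowP => l; apply: eq_ij.
have size_bound : (2 * D' <= Dp.+1)%N by lia.
have form_eq0 p (size_p : (msize p <= 2 * D')%N) :=
  hermite_form_eq0 form_X (leq_trans size_p size_bound).
rewrite -[w]hsubmxK -[rsubmx w]submxrowK.
have -> : lsubmx w = 0.
  by apply/rowP => i; rewrite (hermite_form_value_coef_eq0 nodes_inj form_eq0) mxE.
have -> : \mxrow_i submxrow (rsubmx w) i = \mxrow_i (0 : 'rV[R]_d).
  apply: eq_mxrow => i; apply/rowP => l.
  by rewrite (hermite_form_grad_coef_eq0 nodes_inj form_eq0) mxE.
by rewrite mxrow0 row_mx0.
Qed.

End HermiteMatrix.

Theorem lemma5 (R : realType) (d D' Dp : nat) (z : 'I_D' -> 'rV[R]_d) :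
  injective z -> (2 * D' - 1 <= Dp)%N ->
  \rank (hermite_matrix Dp z) = (D' * (d + 1))%N.
Proof.
move=> z_inj Dp_ge; have /eqP -> := row_free_hermite_matrix z_inj Dp_ge.
by rewrite big_const_ord iter_addn_0; lia.
Qed.
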